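(* Let $P:\mathcal X\to\mathcal B$ be a fibration with fibered pullbacks, let $(p,P)$ and $(q,P)$ be pointed fibrations, and let $\alpha:p\Rightarrow q$ be a natural transformation with $P$-vertical components. Then: (i) for every object $(I,x:X\to qI)$ of the total category of $P/q$, taking the pullback of $x$ along $\alpha_I:pI\to qI$, giving $x':X'\to pI$, defines an assignment $(I,x)\mapsto(I,x':X'\to pI)$ which extends to a fibered functor $\alpha^*:P/q\to_{\mathcal B}P/p$; (ii) the assignment $(I,x:X\to pI)\mapsto(I,\alpha_I\circ x:X\to qI)$ on objects of the total category of $P/p$ (and $(u,f)\mapsto(u,f)$ on morphisms) extends to a fibered functor $\Sigma_\alpha:P/p\to_{\mathcal B}P/q$; (iii) there is a fibered adjunction $\Sigma_\alpha\dashv\alpha^*$ between $P/p$ and $P/q$ in $\mathbf{Fib}(\mathcal B)$.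
   Context: For $P:\mathcal X\to\mathcal B$: $f:X\to Y$ is $P$-cartesian if for every $v:K\to PX$ and $g:Z\to Y$ with $Pg=Pf\circ v$ there is a unique $h:Z\to X$ with $fh=g$, $Ph=v$; $P$ is a fibration if every $Y$ and $u:I\to PY$ admit a cartesian $f$ with $Pf=u$; $f$ is $P$-vertical if $Pf$ is an identity; the fiber $P_I$ consists of morphisms over $1_I$. $P$ has fibered pullbacks if each fiber has pullbacks stable under reindexing. Fibered functors between fibrations over $\mathcal B$ commute with projections and preserve cartesian morphisms; a fibered adjunction is an adjunction between fibered functors with vertical unit and counit; $\mathbf{Fib}(\mathcal B)$ is the 2-category of fibrations over $\mathcal B$, fibered functors and vertical natural transformations. A pointed fibration $(p,P)$ is a fibration with a functor $p:\mathcal B\to\mathcal X$, $Pp=1_{\mathcal B}$, sending every morphism to a $P$-cartesian morphism. The slice fibration $P/p:\mathcal Y\to\mathcal B$: objects of $\mathcal Y$ are pairs $(I,x:X\to pI)$ with $x$ $P$-vertical over $I$; morphisms $(I,x)\to(J,y)$ are pairs $(u,f)$ with $u:I\to J$ in $\mathcal B$, $f:X\to Y$ in $\mathcal X$, $y\circ f=pu\circ x$; $P/p$ is the first projection (it is the change of base of the codomain fibration $\mathbf{cod}_P:V(P)\to\mathcal X$, on $P$-vertical arrows, along $p$). Its cartesian morphisms are those $(u,f)$ whose square $y f=pu\, x$ is a pullback in $\mathcal X$. The pullback in (i) is taken in the fiber $P_I$. *)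

From Stdlib Require Import ProofIrrelevance.

Set Implicit Arguments.
Unset Strict Implicit.

Record Category := {
  Ob :> Type;
  Hom : Ob -> Ob -> Type;
  comp : forall a b c : Ob, Hom b c -> Hom a b -> Hom a c;
  idm : forall a : Ob, Hom a a;
  comp_assoc : forall a b c d (f : Hom a b) (g : Hom b c) (h : Hom c d),
      comp h (comp g f) = comp (comp h g) f;
  comp_id_l : forall a b (f : Hom a b), comp (idm b) f = f;
  comp_id_r : forall a b (f : Hom a b), comp f (idm a) = f }.

Arguments Hom {C} : rename.
Arguments comp {C a b c} : rename.
Arguments idm {C} : rename.

Record Functor (C D : Category) := {
  Fob :> Ob C -> Ob D;
  Fmor : forall a b : Ob C, Hom a b -> Hom (Fob a) (Fob b);
  F_id : forall a, Fmor (idm a) = idm (Fob a);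
  F_comp : forall a b c (f : Hom a b) (g : Hom b c),
      Fmor (comp g f) = comp (Fmor g) (Fmor f) }.

Arguments Fmor {C D} F {a b} : rename.

Record NatTrans (C D : Category) (F G : Functor C D) := {
  nt :> forall a : Ob C, Hom (F a) (G a);
  nt_nat : forall a b (f : Hom a b), comp (nt b) (Fmor F f) = comp (Fmor G f) (nt a) }.

(** A morphism packed together with its domain and codomain; equality of packed
    morphisms is equality of morphisms "with possibly different (but equal)
    endpoints", used e.g. to say that [P f] is the identity of [I]. *)
Definition harr (C : Category) := { ab : Ob C * Ob C & Hom (fst ab) (snd ab) }.
Definition pack {C : Category} {a b : Ob C} (f : Hom a b) : harr C :=
  existT (fun ab : Ob C * Ob C => Hom (fst ab) (snd ab)) (a, b) f.

Section Fib.
Context {X B : Category} (P : Functor X B).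

Definition is_cartesian {A Y : Ob X} (f : Hom A Y) : Prop :=
  forall (Z : Ob X) (v : Hom (P Z) (P A)) (g : Hom Z Y),
    Fmor P g = comp (Fmor P f) v ->
    exists! h : Hom Z A, comp f h = g /\ Fmor P h = v.

Definition is_fibration : Prop :=
  forall (Y : Ob X) (I : Ob B) (u : Hom I (P Y)),
    exists (A : Ob X) (f : Hom A Y), is_cartesian f /\ pack (Fmor P f) = pack u.

Definition over_id (I : Ob B) {A Y : Ob X} (f : Hom A Y) : Prop :=
  pack (Fmor P f) = pack (idm I).

Definition vertical {A Y : Ob X} (f : Hom A Y) : Prop :=
  exists I : Ob B, over_id I f.

Definition fiber_pullback (I : Ob B) {A Y Z W : Ob X}
  (f : Hom A Z) (g : Hom Y Z) (a : Hom W A) (b : Hom W Y) : Prop :=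
  over_id I f /\ over_id I g /\ over_id I a /\ over_id I b /\
  comp f a = comp g b /\
  forall (W' : Ob X) (a' : Hom W' A) (b' : Hom W' Y),
    over_id I a' -> over_id I b' -> comp f a' = comp g b' ->
    exists! h : Hom W' W, over_id I h /\ comp a h = a' /\ comp b h = b'.

(** P has fibered pullbacks: every fiber has pullbacks, and these are stable
    under reindexing (the reindexing of a pullback square of P_I along
    u : J -> I, computed with cartesian liftings, is a pullback in P_J). *)
Definition has_fibered_pullbacks : Prop :=
  (forall (I : Ob B) (A Y Z : Ob X) (f : Hom A Z) (g : Hom Y Z),
      over_id I f -> over_id I g ->
      exists (W : Ob X) (a : Hom W A) (b : Hom W Y), fiber_pullback I f g a b)
  /\
  (forall (I J : Ob B) (u : Hom J I) (A Y Z W : Ob X)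
      (f : Hom A Z) (g : Hom Y Z) (a : Hom W A) (b : Hom W Y),
      fiber_pullback I f g a b ->
      forall (A' Y' Z' W' : Ob X)
        (cA : Hom A' A) (cY : Hom Y' Y) (cZ : Hom Z' Z) (cW : Hom W' W)
        (f' : Hom A' Z') (g' : Hom Y' Z') (a' : Hom W' A') (b' : Hom W' Y'),
        is_cartesian cA -> is_cartesian cY -> is_cartesian cZ -> is_cartesian cW ->
        pack (Fmor P cA) = pack u -> pack (Fmor P cY) = pack u ->
        pack (Fmor P cZ) = pack u -> pack (Fmor P cW) = pack u ->
        over_id J f' -> over_id J g' -> over_id J a' -> over_id J b' ->
        comp cZ f' = comp f cA -> comp cZ g' = comp g cY ->
        comp cA a' = comp a cW -> comp cY b' = comp b cW ->
        fiber_pullback J f' g' a' b').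

Definition is_pointed (p : Functor B X) : Prop :=
  is_fibration /\
  (forall (I J : Ob B) (u : Hom I J), pack (Fmor P (Fmor p u)) = pack u) /\
  (forall (I J : Ob B) (u : Hom I J), is_cartesian (Fmor p u)).

End Fib.

Section Slice.
Context {X B : Category} (P : Functor X B) (p : Functor B X).

Record slob := {
  s_I : Ob B;
  s_X : Ob X;
  s_x : Hom s_X (p s_I);
  s_vert : over_id P s_I s_x }.

Record slhom (o o' : slob) := {
  s_u : Hom (s_I o) (s_I o');
  s_f : Hom (s_X o) (s_X o');
  s_sq : comp (s_x o') s_f = comp (Fmor p s_u) (s_x o) }.

Lemma slhom_eq (o o' : slob) (m n : slhom o o') :
  s_u m = s_u n -> s_f m = s_f n -> m = n.
Proof.
  destruct m as [u f e], n as [u' f' e']; simpl; intros H1 H2; subst.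
  f_equal; apply proof_irrelevance.
Qed.

Program Definition sl_id (o : slob) : slhom o o :=
  {| s_u := idm (s_I o); s_f := idm (s_X o) |}.
Next Obligation.
  intros; rewrite (F_id p), comp_id_l, comp_id_r; reflexivity.
Qed.

Program Definition sl_comp (o1 o2 o3 : slob) (n : slhom o2 o3) (m : slhom o1 o2)
  : slhom o1 o3 :=
  {| s_u := comp (s_u n) (s_u m); s_f := comp (s_f n) (s_f m) |}.
Next Obligation.
  intros; rewrite (F_comp p), comp_assoc, (s_sq n), <- comp_assoc, (s_sq m), comp_assoc.
  reflexivity.
Qed.

Program Definition SliceCat : Category :=
  {| Ob := slob; Hom := slhom; comp := sl_comp; idm := sl_id |}.
Next Obligation. intros; apply slhom_eq; simpl; apply comp_assoc. Qed.
Next Obligation. intros; apply slhom_eq; simpl; apply comp_id_l. Qed.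
Next Obligation. intros; apply slhom_eq; simpl; apply comp_id_r. Qed.

Program Definition SliceProj : Functor SliceCat B :=
  {| Fob := s_I; Fmor := fun o o' (m : slhom o o') => s_u m |}.
Next Obligation. intros; reflexivity. Qed.
Next Obligation. intros; reflexivity. Qed.

Definition sl_data (o : slob) : { I : Ob B & { A : Ob X & Hom A (p I) } } :=
  existT _ (s_I o) (existT _ (s_X o) (s_x o)).

End Slice.

Arguments s_u {X B P p o o'} : rename.
Arguments s_f {X B P p o o'} : rename.

Definition fibered_functor {B E E' : Category} (PE : Functor E B) (PE' : Functor E' B)
  (F : Functor E E') : Prop :=
  (forall (a b : Ob E) (m : Hom a b), pack (Fmor PE' (Fmor F m)) = pack (Fmor PE m)) /\
  (forall (a b : Ob E) (m : Hom a b), is_cartesian PE m -> is_cartesian PE' (Fmor F m)).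


Section FibFun.
Context {B E E' : Category} (PE : Functor E B) (PE' : Functor E' B).

Definition fibered_adjunction (L : Functor E E') (R : Functor E' E) : Prop :=
  fibered_functor PE PE' L /\ fibered_functor PE' PE R /\
  exists (eta : forall a : Ob E, Hom a (R (L a)))
         (eps : forall b : Ob E', Hom (L (R b)) b),
    (forall a a' (f : Hom a a'), comp (eta a') f = comp (Fmor R (Fmor L f)) (eta a)) /\
    (forall b b' (g : Hom b b'), comp (eps b') (Fmor L (Fmor R g)) = comp g (eps b)) /\
    (forall a, comp (eps (L a)) (Fmor L (eta a)) = idm (L a)) /\
    (forall b, comp (Fmor R (eps b)) (eta (R b)) = idm (R b)) /\
    (forall a, vertical PE (eta a)) /\
    (forall b, vertical PE' (eps b)).

End FibFun.

Section AlphaFun.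
Context {X B : Category} (P : Functor X B) (p q : Functor B X) (alpha : NatTrans p q).

(** (i): F : P/q -> P/p is fibered, sends (I, x : A -> q I) to (I, x') where
    x' is the pullback in the fiber P_I of x along alpha_I (with projection
    pi : A' -> A), and is the induced map on morphisms:
    F (u, f) = (u, f') with pi o f' = f o pi. *)
Definition is_pullback_functor (F : Functor (SliceCat P q) (SliceCat P p)) : Prop :=
  fibered_functor (SliceProj P q) (SliceProj P p) F /\
  exists pi : forall o : slob P q, Hom (s_X (F o)) (s_X o),
    (forall (o : slob P q) (e : s_I (F o) = s_I o),
        fiber_pullback P (s_I o) (s_x o) (alpha (s_I o)) (pi o)
          (eq_rect _ (fun I => Hom (s_X (F o)) (p I)) (s_x (F o)) _ e)) /\
    (forall (o o' : slob P q) (m : slhom o o'),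
        comp (pi o') (s_f (Fmor F m)) = comp (s_f m) (pi o)).

Definition is_sigma_functor (S : Functor (SliceCat P p) (SliceCat P q)) : Prop :=
  fibered_functor (SliceProj P p) (SliceProj P q) S /\
  (forall o : slob P p,
      sl_data (S o) =
      existT _ (s_I o) (existT _ (s_X o) (comp (alpha (s_I o)) (s_x o)))) /\
  (forall (o o' : slob P p) (m : slhom o o'),
      pack (s_u (Fmor S m)) = pack (s_u m) /\ pack (s_f (Fmor S m)) = pack (s_f m)).

End AlphaFun.

Arguments is_pullback_functor {X B} P {p q} alpha F.
Arguments is_sigma_functor {X B} P {p q} alpha S.

(* Pullbacks in a fiber P_I are pullbacks in the whole of X: a cone over such
   a square lies over some u, and reindexing the square along u gives, by
   stability, a fiberwise pullback through which the cone factors.  Hence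
   chosen fiberwise pullbacks of x along alpha_I act on all morphisms of P/q;
   as a morphism of a slice fibration is cartesian exactly when its top
   component is, the induced map of pullbacks is cartesian because the maps
   of cospans are.
   The counit of Sigma_alpha -| alpha^* is the pullback projection and the
   unit is the map into the pullback induced by (1, x); both are vertical,
   and naturality and the triangle identities are checked on the jointly
   monic legs of the pullback. *)

From Stdlib Require Import ProofIrrelevance IndefiniteDescription.

Set Implicit Arguments.
Unset Strict Implicit.

Lemma pack_endpoints {C : Category} (a b a' b' : Ob C) (f : Hom a b) (f' : Hom a' b') :
  pack f = pack f' -> a = a' /\ b = b'.
Proof. intro H. apply (f_equal (@projT1 _ _)) in H. simpl in H. injection H. auto. Qed.

Lemma pack_inj {C : Category} (a b : Ob C) (f f' : Hom a b) : pack f = pack f' -> f = f'.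
Proof. apply inj_pair2. Qed.

Ltac unpack H :=
  let Ea := fresh in let Eb := fresh in
  destruct (pack_endpoints H) as [Ea Eb]; subst; apply pack_inj in H; subst.

Section Packing.
Context {C : Category}.

Lemma pack_comp (a b c a' b' c' : Ob C) (f : Hom a b) (g : Hom b c)
  (f' : Hom a' b') (g' : Hom b' c') :
  pack f = pack f' -> pack g = pack g' -> pack (comp g f) = pack (comp g' f').
Proof. intros Hf Hg. unpack Hf. unpack Hg. reflexivity. Qed.

Lemma pack_transport (a b a' b' : Ob C) (f : Hom a b) :
  a = a' -> b = b' -> exists f' : Hom a' b', pack f' = pack f.
Proof. intros; subst; exists f; reflexivity. Qed.

Lemma pack_idm (a a' : Ob C) : a = a' -> pack (idm a) = pack (idm a').
Proof. intros; subst; reflexivity. Qed.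

Lemma pack_comp_idm_l (a b b' c : Ob C) (k : Hom a b) (e : Hom b b') :
  pack e = pack (idm c) -> pack (comp e k) = pack k.
Proof. intro H. unpack H. rewrite comp_id_l. reflexivity. Qed.

Lemma pack_comp_idm_r (a0 a b c : Ob C) (k : Hom a b) (e : Hom a0 a) :
  pack e = pack (idm c) -> pack (comp k e) = pack k.
Proof. intro H. unpack H. rewrite comp_id_r. reflexivity. Qed.

End Packing.

Lemma pack_Fmor (C D : Category) (F : Functor C D) (a b a' b' : Ob C)
  (f : Hom a b) (f' : Hom a' b') : pack f = pack f' -> pack (Fmor F f) = pack (Fmor F f').
Proof. intro H. unpack H. reflexivity. Qed.

Section Cartesian.
Context {X B : Category} (P : Functor X B).

Definition is_cartesian_over {J I : Ob B} (u : Hom J I) {A' A : Ob X} (c : Hom A' A) : Prop :=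
  is_cartesian P c /\ pack (Fmor P c) = pack u.

Lemma over_id_comp_l (I : Ob B) (A Y Z : Ob X) (f : Hom A Y) (g : Hom Z A) :
  over_id P I f -> pack (Fmor P (comp f g)) = pack (Fmor P g).
Proof. intro H. rewrite F_comp. exact (pack_comp_idm_l _ H). Qed.

Lemma over_id_comp_r (I : Ob B) (A Y Z : Ob X) (f : Hom A Y) (g : Hom Y Z) :
  over_id P I f -> pack (Fmor P (comp g f)) = pack (Fmor P g).
Proof. intro H. rewrite F_comp. exact (pack_comp_idm_r _ H). Qed.

Lemma over_id_comp (I : Ob B) (A Y Z : Ob X) (f : Hom A Y) (g : Hom Y Z) :
  over_id P I g -> over_id P I f -> over_id P I (comp g f).
Proof. intros Hg Hf. unfold over_id. rewrite (over_id_comp_r g Hf). exact Hg. Qed.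

Lemma cartesian_factor (J I K : Ob B) (u : Hom J I) (A' A : Ob X) (c : Hom A' A) :
  is_cartesian_over u c ->
  forall (w : Hom K J) (Z : Ob X) (g : Hom Z A),
  pack (Fmor P g) = pack (comp u w) ->
  exists h : Hom Z A', comp c h = g /\ pack (Fmor P h) = pack w.
Proof.
  intros [Hc Hu] w Z g Hg. unpack Hu. unpack Hg.
  destruct (Hc Z w g Hg) as [h [[Eh Hh] _]]. exists h. rewrite Hh. auto.
Qed.

Lemma cartesian_uniq (A' A : Ob X) (c : Hom A' A) (Z : Ob X) (h1 h2 : Hom Z A') :
  is_cartesian P c ->
  comp c h1 = comp c h2 -> pack (Fmor P h1) = pack (Fmor P h2) -> h1 = h2.
Proof.
  intros Hc E1 E2. apply pack_inj in E2.
  destruct (Hc Z (Fmor P h1) (comp c h1) (F_comp P h1 c)) as [h [_ U]].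
  rewrite <- (U h1), <- (U h2); auto.
Qed.

Lemma cartesian_factor_over_id (J I : Ob B) (u : Hom J I) (A' A Z : Ob X)
  (c : Hom A' A) (g : Hom Z A) :
  is_cartesian_over u c -> pack (Fmor P g) = pack u ->
  exists h : Hom Z A', comp c h = g /\ over_id P J h.
Proof. intros Hc Hg. apply (cartesian_factor Hc (w := idm J)). rewrite comp_id_r. exact Hg. Qed.

Lemma vertical_reindex (J I : Ob B) (u : Hom J I) (A Z A' Z' : Ob X)
  (f : Hom A Z) (cA : Hom A' A) (cZ : Hom Z' Z) :
  over_id P I f -> is_cartesian_over u cA -> is_cartesian_over u cZ ->
  exists f' : Hom A' Z', comp cZ f' = comp f cA /\ over_id P J f'.
Proof.
  intros Hf HA HZ. apply (cartesian_factor_over_id HZ).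
  rewrite (over_id_comp_l cA Hf). apply HA.
Qed.

Lemma cartesian_lift (J I : Ob B) (u : Hom J I) (Y : Ob X) :
  is_fibration P -> Fob P Y = I -> exists (A : Ob X) (c : Hom A Y), is_cartesian_over u c.
Proof. intros Hfib E. subst I. exact (Hfib Y J u). Qed.

End Cartesian.

Section FiberedPullbacks.
Context {X B : Category} (P : Functor X B) (Hfib : is_fibration P)
  (Hfp : has_fibered_pullbacks P).

Section Reindexed.
Context {I K : Ob B} (u : Hom K I) {A Y Z W A' Y' Z' W' : Ob X}
  {f : Hom A Z} {g : Hom Y Z} {a : Hom W A} {b : Hom W Y}
  {cA : Hom A' A} {cY : Hom Y' Y} {cZ : Hom Z' Z} {cW : Hom W' W}
  {f' : Hom A' Z'} {g' : Hom Y' Z'} {a' : Hom W' A'} {b' : Hom W' Y'}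
  (FP : fiber_pullback P I f g a b) (FP' : fiber_pullback P K f' g' a' b')
  (HA : is_cartesian_over P u cA) (HY : is_cartesian_over P u cY)
  (HZ : is_cartesian_over P u cZ) (HW : is_cartesian_over P u cW)
  (Ef : comp cZ f' = comp f cA) (Eg : comp cZ g' = comp g cY)
  (Ea : comp cA a' = comp a cW) (Eb : comp cY b' = comp b cW).

Lemma reindexed_pullback_factor (T : Ob X) (s : Hom T A) (t : Hom T Y) :
  comp f s = comp g t -> pack (Fmor P s) = pack u ->
  exists! h : Hom T W, comp a h = s /\ comp b h = t.
Proof.
  intros Hst Hs.
  destruct FP as [Hf [Hg [Ha [Hb _]]]].
  destruct FP' as [Hf' [Hg' [Ha' [Hb' [_ Huniv']]]]].
  assert (Ht : pack (Fmor P t) = pack u).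
  { rewrite <- Hs, <- (over_id_comp_l s Hf), Hst. exact (eq_sym (over_id_comp_l t Hg)). }
  destruct (cartesian_factor_over_id HA Hs) as [s' [Es Hs']].
  destruct (cartesian_factor_over_id HY Ht) as [t' [Et Ht']].
  destruct (Huniv' T s' t' Hs' Ht') as [k [[_ [Ek1 Ek2]] Hk]].
  { apply (cartesian_uniq (proj1 HZ)).
    - rewrite !comp_assoc, Ef, Eg, <- !comp_assoc, Es, Et. exact Hst.
    - rewrite (over_id_comp_l s' Hf'), (over_id_comp_l t' Hg'), Hs', Ht'. reflexivity. }
  exists (comp cW k). split.
  - rewrite !comp_assoc, <- Ea, <- Eb, <- !comp_assoc, Ek1, Ek2. auto.
  - intros h [Eh1 Eh2].
    assert (Hh : pack (Fmor P h) = pack u).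
    { rewrite <- (over_id_comp_l h Ha), Eh1. exact Hs. }
    destruct (cartesian_factor_over_id HW Hh) as [k' [Ek' Hk']].
    rewrite <- Ek'. f_equal. apply Hk. split; [exact Hk' | split].
    + apply (cartesian_uniq (proj1 HA)).
      * rewrite comp_assoc, Ea, <- comp_assoc, Ek', Eh1. symmetry. exact Es.
      * rewrite (over_id_comp_l k' Ha'), Hk', Hs'. reflexivity.
    + apply (cartesian_uniq (proj1 HY)).
      * rewrite comp_assoc, Eb, <- comp_assoc, Ek', Eh2. symmetry. exact Et.
      * rewrite (over_id_comp_l k' Hb'), Hk', Ht'. reflexivity.
Qed.

End Reindexed.

Lemma fiber_pullback_universal (I : Ob B) (A Y Z W : Ob X)
  (f : Hom A Z) (g : Hom Y Z) (a : Hom W A) (b : Hom W Y) :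
  fiber_pullback P I f g a b ->
  forall (T : Ob X) (s : Hom T A) (t : Hom T Y), comp f s = comp g t ->
  exists! h : Hom T W, comp a h = s /\ comp b h = t.
Proof.
  intros FP T s t Hst.
  pose proof FP as [Hf [Hg [Ha [Hb _]]]].
  destruct (pack_endpoints Hf) as [EA EZ].
  destruct (pack_endpoints Hg) as [EY _].
  destruct (pack_endpoints Ha) as [EW _].
  destruct (pack_transport (Fmor P s) eq_refl EA) as [u Hu].
  destruct (cartesian_lift u Hfib EA) as [A' [cA HA]].
  destruct (cartesian_lift u Hfib EY) as [Y' [cY HY]].
  destruct (cartesian_lift u Hfib EZ) as [Z' [cZ HZ]].
  destruct (cartesian_lift u Hfib EW) as [W' [cW HW]].
  destruct (vertical_reindex Hf HA HZ) as [f' [Ef Hf']].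
  destruct (vertical_reindex Hg HY HZ) as [g' [Eg Hg']].
  destruct (vertical_reindex Ha HW HA) as [a' [Ea Ha']].
  destruct (vertical_reindex Hb HW HY) as [b' [Eb Hb']].
  pose proof (proj2 Hfp _ _ u _ _ _ _ f g a b FP _ _ _ _ cA cY cZ cW f' g' a' b'
    (proj1 HA) (proj1 HY) (proj1 HZ) (proj1 HW) (proj2 HA) (proj2 HY) (proj2 HZ) (proj2 HW)
    Hf' Hg' Ha' Hb' Ef Eg Ea Eb) as FP'.
  exact (reindexed_pullback_factor FP FP' HA HY HZ HW Ef Eg Ea Eb Hst (eq_sym Hu)).
Qed.

Lemma fiber_pullback_jointly_monic (I : Ob B) (A Y Z W : Ob X)
  (f : Hom A Z) (g : Hom Y Z) (a : Hom W A) (b : Hom W Y) :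
  fiber_pullback P I f g a b ->
  forall (T : Ob X) (h1 h2 : Hom T W), comp a h1 = comp a h2 -> comp b h1 = comp b h2 -> h1 = h2.
Proof.
  intros FP T h1 h2 E1 E2.
  destruct (fiber_pullback_universal FP (s := comp a h1) (t := comp b h1)) as [h [_ U]].
  { rewrite !comp_assoc. f_equal. apply FP. }
  rewrite <- (U h1), <- (U h2); auto.
Qed.

Lemma pullback_map_cartesian (I J : Ob B) (u : Hom I J) (A Y Z W A' Y' Z' W' : Ob X)
  (f : Hom A Z) (g : Hom Y Z) (a : Hom W A) (b : Hom W Y)
  (f' : Hom A' Z') (g' : Hom Y' Z') (a' : Hom W' A') (b' : Hom W' Y')
  (cA : Hom A A') (cY : Hom Y Y') (cZ : Hom Z Z') (h : Hom W W') :
  fiber_pullback P I f g a b -> fiber_pullback P J f' g' a' b' ->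
  is_cartesian_over P u cA -> is_cartesian_over P u cY -> is_cartesian_over P u cZ ->
  comp f' cA = comp cZ f -> comp g' cY = comp cZ g ->
  comp a' h = comp cA a -> comp b' h = comp cY b ->
  is_cartesian P h.
Proof.
  intros FP FP' HA HY HZ Ef Eg Ea Eb T v k Hk.
  pose proof FP as [Hf [Hg [Ha [Hb _]]]].
  pose proof FP' as [_ [_ [Ha' [Hb' [Hsq' _]]]]].
  assert (Hh : pack (Fmor P h) = pack u).
  { rewrite <- (over_id_comp_l h Ha'), Ea, (over_id_comp_r cA Ha). apply HA. }
  destruct (pack_endpoints Ha) as [EW _].
  destruct (pack_transport v eq_refl EW) as [w Hw].
  assert (Hk' : pack (Fmor P k) = pack (comp u w)).
  { rewrite Hk. apply pack_comp; [symmetry; exact Hw | exact Hh]. }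
  destruct (cartesian_factor HA (w := w) (g := comp a' k)) as [kA [EkA HkA]].
  { rewrite (over_id_comp_l k Ha'). exact Hk'. }
  destruct (cartesian_factor HY (w := w) (g := comp b' k)) as [kY [EkY HkY]].
  { rewrite (over_id_comp_l k Hb'). exact Hk'. }
  destruct (fiber_pullback_universal FP (s := kA) (t := kY)) as [j [[Ej1 Ej2] _]].
  { apply (cartesian_uniq (proj1 HZ)).
    - rewrite !comp_assoc, <- Ef, <- Eg, <- !comp_assoc, EkA, EkY, !comp_assoc, Hsq'.
      reflexivity.
    - rewrite (over_id_comp_l kA Hf), (over_id_comp_l kY Hg), HkA, HkY. reflexivity. }
  exists j. split.
  - split.
    + apply (fiber_pullback_jointly_monic FP').
      * rewrite comp_assoc, Ea, <- comp_assoc, Ej1. exact EkA.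
      * rewrite comp_assoc, Eb, <- comp_assoc, Ej2. exact EkY.
    + apply pack_inj. rewrite <- (over_id_comp_l j Ha), Ej1, HkA. exact Hw.
  - intros j' [E1 E2]. apply (fiber_pullback_jointly_monic FP).
    + rewrite Ej1. apply (cartesian_uniq (proj1 HA)).
      * rewrite EkA, comp_assoc, <- Ea, <- comp_assoc, E1. reflexivity.
      * rewrite HkA, (over_id_comp_l j' Ha), E2. exact Hw.
    + rewrite Ej2. apply (cartesian_uniq (proj1 HY)).
      * rewrite EkY, comp_assoc, <- Eb, <- comp_assoc, E1. reflexivity.
      * rewrite HkY, (over_id_comp_l j' Hb), E2. exact Hw.
Qed.

End FiberedPullbacks.

Section Slices.
Context {X B : Category} (P : Functor X B) (r : Functor B X) (Hr : is_pointed P r).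

Lemma pointed_cartesian_over (I J : Ob B) (u : Hom I J) : is_cartesian_over P u (Fmor r u).
Proof. split; apply Hr. Qed.

Lemma slhom_over (o o' : slob P r) (m : slhom o o') : pack (Fmor P (s_f m)) = pack (s_u m).
Proof.
  pose proof (f_equal (@pack _ _ _) (f_equal (Fmor P) (s_sq m))) as E.
  rewrite (over_id_comp_l _ (s_vert o')) in E. rewrite E.
  rewrite (over_id_comp_r _ (s_vert o)). apply (pointed_cartesian_over (s_u m)).
Qed.

Lemma slice_cartesian_of_cartesian (o o' : slob P r) (m : slhom o o') :
  is_cartesian P (s_f m) -> is_cartesian (SliceProj P r) m.
Proof.
  intros Hc Z v g Hg. simpl in Hg.
  destruct (cartesian_factor (conj Hc (slhom_over m)) (w := v) (g := s_f g)) as [h [Eh Hh]].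
  { rewrite (slhom_over g), Hg. reflexivity. }
  assert (sq : comp (s_x o) h = comp (Fmor r v) (s_x Z)).
  { apply (cartesian_uniq (proj1 (pointed_cartesian_over (s_u m)))).
    - rewrite comp_assoc, <- (s_sq m), <- comp_assoc, Eh, (s_sq g), Hg, F_comp, comp_assoc.
      reflexivity.
    - rewrite (over_id_comp_l _ (s_vert o)), (over_id_comp_r _ (s_vert Z)).
      rewrite Hh. symmetry. apply (pointed_cartesian_over v). }
  exists (@Build_slhom X B P r Z o v h sq). split.
  - split; [apply slhom_eq; simpl; [symmetry; exact Hg | exact Eh] | reflexivity].
  - intros h' [E1 E2]. simpl in E2. apply slhom_eq; simpl.
    + symmetry; exact E2.
    + apply (cartesian_uniq Hc).
      * rewrite Eh, <- E1. reflexivity.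
      * rewrite Hh, (slhom_over h'), E2. reflexivity.
Qed.

Lemma cartesian_of_slice_cartesian (o o' : slob P r) (m : slhom o o') :
  is_cartesian (SliceProj P r) m -> is_cartesian P (s_f m).
Proof.
  intros Hc T v g Hg.
  destruct (pack_endpoints (s_vert o)) as [EXo _].
  destruct (pack_transport v eq_refl EXo) as [v' Hv'].
  assert (Hg' : pack (Fmor P g) = pack (comp (s_u m) v')).
  { rewrite Hg. apply pack_comp; [symmetry; exact Hv' | apply slhom_over]. }
  destruct (cartesian_factor (pointed_cartesian_over (comp (s_u m) v')) (w := idm (Fob P T))
              (g := comp (s_x o') g)) as [z [Ez Hz]].
  { rewrite comp_id_r, (over_id_comp_l _ (s_vert o')). exact Hg'. }
  set (Zo := {| s_I := Fob P T; s_X := T; s_x := z; s_vert := Hz |} : slob P r).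
  destruct (Hc Zo v' (@Build_slhom X B P r Zo o' _ g (eq_sym Ez)) eq_refl)
    as [H [[EH1 EH2] HU]].
  simpl in EH2.
  exists (s_f H). split.
  - split; [exact (f_equal (@s_f _ _ _ _ _ _) EH1) |].
    apply pack_inj. rewrite <- Hv', <- EH2. exact (slhom_over H).
  - intros h' [E1 E2].
    assert (sq : comp (s_x o) h' = comp (Fmor r v') (s_x Zo)).
    { apply (cartesian_uniq (proj1 (pointed_cartesian_over (s_u m)))).
      - simpl. rewrite comp_assoc, <- (s_sq m), <- comp_assoc, E1, <- Ez, F_comp,
          <- comp_assoc. reflexivity.
      - simpl. rewrite (over_id_comp_l _ (s_vert o)), (over_id_comp_r _ Hz).
        rewrite (proj2 (pointed_cartesian_over v')), E2. symmetry; exact Hv'. }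
    assert (EH : H = @Build_slhom X B P r Zo o v' h' sq).
    { apply HU. split; [apply slhom_eq; simpl; [reflexivity | exact E1] | reflexivity]. }
    rewrite EH. reflexivity.
Qed.

Lemma slob_eq_of_data (o1 o2 : slob P r) : sl_data o1 = sl_data o2 -> o1 = o2.
Proof.
  destruct o1 as [I1 X1 x1 v1], o2 as [I2 X2 x2 v2]. unfold sl_data. simpl. intro H.
  pose proof (f_equal (@projT1 _ _) H) as E. simpl in E. subst I2.
  apply inj_pair2 in H.
  pose proof (f_equal (@projT1 _ _) H) as E. simpl in E. subst X2.
  apply inj_pair2 in H. subst x2. f_equal. apply proof_irrelevance.
Qed.

End Slices.

Section Alpha.
Context {X B : Category} (P : Functor X B) (p q : Functor B X) (alpha : NatTrans p q)
  (Hp : is_pointed P p) (Hq : is_pointed P q)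
  (Hal : forall I : Ob B, vertical P (alpha I)).

Lemma alpha_over_id (I : Ob B) : over_id P I (alpha I).
Proof.
  destruct (Hal I) as [J HJ]. destruct (pack_endpoints HJ) as [E1 _].
  destruct (pack_endpoints (proj2 (pointed_cartesian_over Hp (idm I)))) as [E2 _].
  unfold over_id. rewrite HJ. apply pack_idm. congruence.
Qed.

Definition sigma_ob (o : slob P p) : slob P q :=
  {| s_I := s_I o; s_X := s_X o; s_x := comp (alpha (s_I o)) (s_x o);
     s_vert := over_id_comp (alpha_over_id (s_I o)) (s_vert o) |}.

Lemma sigma_sq (o o' : slob P p) (m : slhom o o') :
  comp (s_x (sigma_ob o')) (s_f m) = comp (Fmor q (s_u m)) (s_x (sigma_ob o)).
Proof.
  simpl. rewrite <- comp_assoc, (s_sq m), comp_assoc, (nt_nat alpha), <- comp_assoc.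
  reflexivity.
Qed.

Definition sigma_hom (o o' : slob P p) (m : slhom o o') : slhom (sigma_ob o) (sigma_ob o') :=
  @Build_slhom X B P q (sigma_ob o) (sigma_ob o') (s_u m) (s_f m) (sigma_sq m).

Definition SigmaFun : Functor (SliceCat P p) (SliceCat P q).
Proof.
  refine (@Build_Functor (SliceCat P p) (SliceCat P q) sigma_ob sigma_hom _ _);
    intros; apply slhom_eq; reflexivity.
Defined.

Lemma SigmaFun_is_sigma : is_sigma_functor P alpha SigmaFun.
Proof.
  split; [split | split].
  - reflexivity.
  - intros o o' m Hm. apply (slice_cartesian_of_cartesian Hq).
    exact (cartesian_of_slice_cartesian Hp Hm).
  - reflexivity.
  - split; reflexivity.
Qed.

Section PullbackFunctor.
Context (Hfib : is_fibration P) (Hfp : has_fibered_pullbacks P).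

Lemma slice_pullback_exists (o : slob P q) :
  exists c : { W : Ob X & (Hom W (s_X o) * Hom W (p (s_I o)))%type },
    fiber_pullback P (s_I o) (s_x o) (alpha (s_I o)) (fst (projT2 c)) (snd (projT2 c)).
Proof.
  destruct (proj1 Hfp (s_I o) _ _ _ (s_x o) (alpha (s_I o)) (s_vert o) (alpha_over_id _))
    as [W [a [b Hpb]]].
  exists (existT _ W (a, b)). exact Hpb.
Qed.

Definition pb_choice (o : slob P q) :
  { W : Ob X & (Hom W (s_X o) * Hom W (p (s_I o)))%type } :=
  proj1_sig (constructive_indefinite_description _ (slice_pullback_exists o)).
Definition pb_carrier (o : slob P q) : Ob X := projT1 (pb_choice o).
Definition pb_fst (o : slob P q) : Hom (pb_carrier o) (s_X o) := fst (projT2 (pb_choice o)).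
Definition pb_snd (o : slob P q) : Hom (pb_carrier o) (p (s_I o)) := snd (projT2 (pb_choice o)).

Lemma pb_fiber_pullback (o : slob P q) :
  fiber_pullback P (s_I o) (s_x o) (alpha (s_I o)) (pb_fst o) (pb_snd o).
Proof. exact (proj2_sig (constructive_indefinite_description _ (slice_pullback_exists o))). Qed.

Lemma pb_snd_over_id (o : slob P q) : over_id P (s_I o) (pb_snd o).
Proof. apply (pb_fiber_pullback o). Qed.

Lemma pb_square (o : slob P q) : comp (s_x o) (pb_fst o) = comp (alpha (s_I o)) (pb_snd o).
Proof. apply (pb_fiber_pullback o). Qed.

Definition pb_ob (o : slob P q) : slob P p :=
  {| s_I := s_I o; s_X := pb_carrier o; s_x := pb_snd o; s_vert := pb_snd_over_id o |}.

Lemma pb_map_exists (o o' : slob P q) (m : slhom o o') :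
  exists h : Hom (pb_carrier o) (pb_carrier o'),
    comp (pb_fst o') h = comp (s_f m) (pb_fst o) /\
    comp (pb_snd o') h = comp (Fmor p (s_u m)) (pb_snd o).
Proof.
  destruct (fiber_pullback_universal Hfib Hfp (pb_fiber_pullback o')
              (s := comp (s_f m) (pb_fst o)) (t := comp (Fmor p (s_u m)) (pb_snd o)))
    as [h [H _]].
  { rewrite !comp_assoc, (s_sq m), <- comp_assoc, pb_square, comp_assoc, <- (nt_nat alpha).
    reflexivity. }
  exists h. exact H.
Qed.

Definition pb_map (o o' : slob P q) (m : slhom o o') : Hom (pb_carrier o) (pb_carrier o') :=
  proj1_sig (constructive_indefinite_description _ (pb_map_exists m)).

Lemma pb_map_spec (o o' : slob P q) (m : slhom o o') :
  comp (pb_fst o') (pb_map m) = comp (s_f m) (pb_fst o) /\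
  comp (pb_snd o') (pb_map m) = comp (Fmor p (s_u m)) (pb_snd o).
Proof. exact (proj2_sig (constructive_indefinite_description _ (pb_map_exists m))). Qed.

Definition pb_hom (o o' : slob P q) (m : slhom o o') : slhom (pb_ob o) (pb_ob o') :=
  @Build_slhom X B P p (pb_ob o) (pb_ob o') (s_u m) (pb_map m) (proj2 (pb_map_spec m)).

Lemma pb_hom_id (o : slob P q) : pb_hom (sl_id o) = sl_id (pb_ob o).
Proof.
  apply slhom_eq; [reflexivity |]. simpl.
  apply (fiber_pullback_jointly_monic Hfib Hfp (pb_fiber_pullback o)).
  - rewrite (proj1 (pb_map_spec _)). simpl. rewrite comp_id_l, comp_id_r. reflexivity.
  - rewrite (proj2 (pb_map_spec _)). simpl. rewrite F_id, comp_id_l, comp_id_r. reflexivity.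
Qed.

Lemma pb_hom_comp (o1 o2 o3 : slob P q) (n : slhom o2 o3) (m : slhom o1 o2) :
  pb_hom (sl_comp n m) = sl_comp (pb_hom n) (pb_hom m).
Proof.
  apply slhom_eq; [reflexivity |]. simpl.
  apply (fiber_pullback_jointly_monic Hfib Hfp (pb_fiber_pullback o3)).
  - rewrite (proj1 (pb_map_spec _)). simpl. rewrite comp_assoc, (proj1 (pb_map_spec _)).
    rewrite <- !comp_assoc, (proj1 (pb_map_spec _)). reflexivity.
  - rewrite (proj2 (pb_map_spec _)). simpl. rewrite comp_assoc, (proj2 (pb_map_spec _)).
    rewrite <- !comp_assoc, (proj2 (pb_map_spec _)), F_comp, <- comp_assoc. reflexivity.
Qed.

Definition PullbackFun : Functor (SliceCat P q) (SliceCat P p).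
Proof.
  refine (@Build_Functor (SliceCat P q) (SliceCat P p) pb_ob pb_hom _ _).
  - intro; apply pb_hom_id.
  - intros; apply pb_hom_comp.
Defined.

Lemma PullbackFun_is_pullback : is_pullback_functor P alpha PullbackFun.
Proof.
  split; [split |].
  - reflexivity.
  - intros o o' m Hm. apply (slice_cartesian_of_cartesian Hp). simpl.
    apply (pullback_map_cartesian Hfib Hfp (pb_fiber_pullback o) (pb_fiber_pullback o')
             (conj (cartesian_of_slice_cartesian Hq Hm) (slhom_over Hq m))
             (pointed_cartesian_over Hp (s_u m)) (pointed_cartesian_over Hq (s_u m))).
    + exact (s_sq m).
    + exact (nt_nat alpha (s_u m)).
    + exact (proj1 (pb_map_spec m)).
    + exact (proj2 (pb_map_spec m)).
  - exists pb_fst. split.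
    + intros o e. simpl in e. rewrite (proof_irrelevance _ e eq_refl). apply pb_fiber_pullback.
    + intros o o' m. exact (proj1 (pb_map_spec m)).
Qed.

Definition is_alpha_pullback (o : slob P q) (o1 : slob P p) (pi1 : Hom (s_X o1) (s_X o)) : Prop :=
  exists e : s_I o1 = s_I o,
    fiber_pullback P (s_I o) (s_x o) (alpha (s_I o)) pi1
      (eq_rect _ (fun I => Hom (s_X o1) (p I)) (s_x o1) _ e).

Arguments is_alpha_pullback : clear implicits.

Lemma alpha_pullback_legs_monic (o : slob P q) (o1 : slob P p) (pi1 : Hom (s_X o1) (s_X o)) :
  is_alpha_pullback o o1 pi1 ->
  forall (T : Ob X) (h1 h2 : Hom T (s_X o1)),
  comp pi1 h1 = comp pi1 h2 -> comp (s_x o1) h1 = comp (s_x o1) h2 -> h1 = h2.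
Proof.
  destruct o1 as [I1 X1 x1 v1]. intros [e FP]. simpl in *. subst I1. simpl in FP.
  exact (fiber_pullback_jointly_monic Hfib Hfp FP).
Qed.

(* The equation [o = sigma_ob a] is a hypothesis because it is only
   propositional for the object [S a] of an arbitrary sigma functor. *)
Lemma alpha_pullback_unit (a : slob P p) (o : slob P q) (o1 : slob P p)
  (pi1 : Hom (s_X o1) (s_X o)) :
  o = sigma_ob a -> is_alpha_pullback o o1 pi1 ->
  exists m : slhom a o1, pack (s_u m) = pack (idm (s_I a)) /\
    pack (comp pi1 (s_f m)) = pack (idm (s_X a)) /\
    pack (comp (s_x o1) (s_f m)) = pack (s_x a).
Proof.
  intros Eo. subst o. destruct o1 as [I1 X1 x1 v1].
  intros [e FP]. simpl in *. subst I1. simpl in FP.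
  destruct (fiber_pullback_universal Hfib Hfp FP (s := idm (s_X a)) (t := s_x a))
    as [h [[E1 E2] _]].
  { rewrite comp_id_r. reflexivity. }
  assert (sq : comp x1 h = comp (Fmor p (idm (s_I a))) (s_x a)).
  { rewrite F_id, comp_id_l. exact E2. }
  exists (@Build_slhom X B P p a (Build_slob v1) (idm (s_I a)) h sq).
  simpl. rewrite E1, E2. auto.
Qed.

Lemma alpha_pullback_counit (o : slob P q) (o1 : slob P p) (pi1 : Hom (s_X o1) (s_X o))
  (o' : slob P q) :
  o' = sigma_ob o1 -> is_alpha_pullback o o1 pi1 ->
  exists m : slhom o' o, pack (s_u m) = pack (idm (s_I o)) /\ pack (s_f m) = pack pi1.
Proof.
  intros E'. subst o'. destruct o1 as [I1 X1 x1 v1].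
  intros [e FP]. simpl in *. subst I1. simpl in FP.
  destruct FP as [_ [_ [_ [_ [Hsq _]]]]].
  assert (sq : comp (s_x o) pi1 = comp (Fmor q (idm (s_I o))) (s_x (sigma_ob (Build_slob v1)))).
  { simpl. rewrite F_id, comp_id_l. exact Hsq. }
  exists (@Build_slhom X B P q (sigma_ob (Build_slob v1)) o (idm (s_I o)) pi1 sq). auto.
Qed.

Section Adjunction.
Context (F : Functor (SliceCat P q) (SliceCat P p)) (S : Functor (SliceCat P p) (SliceCat P q))
  (HF : fibered_functor (SliceProj P q) (SliceProj P p) F)
  (pi : forall o : slob P q, Hom (s_X (F o)) (s_X o))
  (Hpi : forall (o : slob P q) (e : s_I (F o) = s_I o),
      fiber_pullback P (s_I o) (s_x o) (alpha (s_I o)) (pi o)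
        (eq_rect _ (fun I => Hom (s_X (F o)) (p I)) (s_x (F o)) _ e))
  (Hpi_nat : forall (o o' : slob P q) (m : slhom o o'),
      comp (pi o') (s_f (Fmor F m)) = comp (s_f m) (pi o))
  (HS : is_sigma_functor P alpha S).

Lemma F_hom_base (o o' : slob P q) (m : slhom o o') : pack (s_u (Fmor F m)) = pack (s_u m).
Proof. exact (proj1 HF o o' m). Qed.

Lemma F_ob_base (o : slob P q) : s_I (F o) = s_I o.
Proof. exact (proj1 (pack_endpoints (F_hom_base (idm (C := SliceCat P q) o)))). Qed.

Lemma S_ob (a : slob P p) : S a = sigma_ob a.
Proof. apply slob_eq_of_data. exact (proj1 (proj2 HS) a). Qed.

Lemma S_hom_base (o o' : slob P p) (m : slhom o o') : pack (s_u (Fmor S m)) = pack (s_u m).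
Proof. exact (proj1 (proj2 (proj2 HS) o o' m)). Qed.

Lemma S_hom_fiber (o o' : slob P p) (m : slhom o o') : pack (s_f (Fmor S m)) = pack (s_f m).
Proof. exact (proj2 (proj2 (proj2 HS) o o' m)). Qed.

Lemma F_alpha_pullback (o : slob P q) : is_alpha_pullback o (F o) (pi o).
Proof. exists (F_ob_base o). apply Hpi. Qed.

Definition eta (a : slob P p) : slhom a (F (S a)) :=
  proj1_sig (constructive_indefinite_description _
    (alpha_pullback_unit (S_ob a) (F_alpha_pullback (S a)))).

Lemma eta_spec (a : slob P p) :
  pack (s_u (eta a)) = pack (idm (s_I a)) /\
  pack (comp (pi (S a)) (s_f (eta a))) = pack (idm (s_X a)) /\
  pack (comp (s_x (F (S a))) (s_f (eta a))) = pack (s_x a).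
Proof. unfold eta. apply proj2_sig. Qed.

Definition eps (b : slob P q) : slhom (S (F b)) b :=
  proj1_sig (constructive_indefinite_description _
    (alpha_pullback_counit (S_ob (F b)) (F_alpha_pullback b))).

Lemma eps_spec (b : slob P q) :
  pack (s_u (eps b)) = pack (idm (s_I b)) /\ pack (s_f (eps b)) = pack (pi b).
Proof. unfold eps. apply proj2_sig. Qed.

Lemma eta_natural (a a' : slob P p) (f : slhom a a') :
  sl_comp (eta a') f = sl_comp (Fmor F (Fmor S f)) (eta a).
Proof.
  apply slhom_eq; simpl.
  - apply pack_inj.
    transitivity (pack (comp (idm (s_I a')) (s_u f))).
    { apply pack_comp; [reflexivity | apply eta_spec]. }
    rewrite comp_id_l, <- (comp_id_r (s_u f)) at 1.
    symmetry. apply pack_comp; [apply eta_spec |].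
    rewrite F_hom_base. apply S_hom_base.
  - apply (alpha_pullback_legs_monic (F_alpha_pullback (S a'))).
    + apply pack_inj. rewrite comp_assoc.
      transitivity (pack (comp (idm (s_X a')) (s_f f))).
      { apply pack_comp; [reflexivity | apply eta_spec]. }
      rewrite comp_id_l, comp_assoc, Hpi_nat, <- comp_assoc, <- (comp_id_r (s_f f)) at 1.
      symmetry. apply pack_comp; [apply eta_spec | apply S_hom_fiber].
    + apply pack_inj. rewrite comp_assoc.
      transitivity (pack (comp (s_x a') (s_f f))).
      { apply pack_comp; [reflexivity | apply eta_spec]. }
      rewrite (s_sq f), comp_assoc, (s_sq (Fmor F (Fmor S f))), <- comp_assoc.
      symmetry. apply pack_comp; [apply eta_spec |]. apply pack_Fmor.
      rewrite F_hom_base. apply S_hom_base.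
Qed.

Lemma eps_natural (b b' : slob P q) (g : slhom b b') :
  sl_comp (eps b') (Fmor S (Fmor F g)) = sl_comp g (eps b).
Proof.
  apply slhom_eq; simpl.
  - apply pack_inj.
    transitivity (pack (comp (idm (s_I b')) (s_u g))).
    { apply pack_comp; [| apply eps_spec]. rewrite S_hom_base. apply F_hom_base. }
    rewrite comp_id_l, <- (comp_id_r (s_u g)) at 1.
    apply pack_comp; [symmetry; apply eps_spec | reflexivity].
  - apply pack_inj.
    transitivity (pack (comp (pi b') (s_f (Fmor F g)))).
    { apply pack_comp; [apply S_hom_fiber | apply eps_spec]. }
    rewrite Hpi_nat. apply pack_comp; [symmetry; apply eps_spec | reflexivity].
Qed.

Lemma eps_S_eta (a : slob P p) : sl_comp (eps (S a)) (Fmor S (eta a)) = sl_id (S a).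
Proof.
  assert (Ea : S a = sigma_ob a) by apply S_ob.
  apply slhom_eq; simpl.
  - apply pack_inj.
    transitivity (pack (comp (idm (s_I (S a))) (idm (s_I (S a))))).
    { apply pack_comp; [| apply eps_spec]. rewrite S_hom_base, (proj1 (eta_spec a)).
      apply pack_idm. rewrite Ea. reflexivity. }
    rewrite comp_id_l. reflexivity.
  - apply pack_inj.
    transitivity (pack (comp (pi (S a)) (s_f (eta a)))).
    { apply pack_comp; [apply S_hom_fiber | apply eps_spec]. }
    rewrite (proj1 (proj2 (eta_spec a))). apply pack_idm. rewrite Ea. reflexivity.
Qed.

Lemma F_eps_eta (b : slob P q) : sl_comp (Fmor F (eps b)) (eta (F b)) = sl_id (F b).
Proof.
  assert (Eb : pack (s_u (Fmor F (eps b))) = pack (idm (s_I (F b)))).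
  { rewrite F_hom_base, (proj1 (eps_spec b)). apply pack_idm. symmetry. apply F_ob_base. }
  apply slhom_eq; simpl.
  - apply pack_inj.
    transitivity (pack (comp (idm (s_I (F b))) (idm (s_I (F b))))).
    { apply pack_comp; [apply eta_spec | exact Eb]. }
    rewrite comp_id_l. reflexivity.
  - apply (alpha_pullback_legs_monic (F_alpha_pullback b)).
    + apply pack_inj. rewrite comp_assoc, Hpi_nat, <- comp_assoc.
      apply pack_comp; [apply eta_spec | apply eps_spec].
    + apply pack_inj. rewrite comp_assoc, (s_sq (Fmor F (eps b))), <- comp_assoc.
      transitivity (pack (comp (idm (p (s_I (F b)))) (s_x (F b)))).
      { apply pack_comp; [apply eta_spec |].
        rewrite <- F_id. exact (pack_Fmor p Eb). }
      rewrite comp_id_l, comp_id_r. reflexivity.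
Qed.

Lemma sigma_pullback_adjunction : fibered_adjunction (SliceProj P p) (SliceProj P q) S F.
Proof.
  split; [exact (proj1 HS) | split; [exact HF |]].
  exists eta, eps.
  split; [exact eta_natural |].
  split; [exact eps_natural |].
  split; [exact eps_S_eta |].
  split; [exact F_eps_eta |].
  split; [intro a; exists (s_I a); apply eta_spec | intro b; exists (s_I b); apply eps_spec].
Qed.

End Adjunction.

End PullbackFunctor.
End Alpha.

Theorem mainTheorem4 (X B : Category) (P : Functor X B) (p q : Functor B X)
  (alpha : NatTrans p q) :
  is_fibration P ->
  has_fibered_pullbacks P ->
  is_pointed P p ->
  is_pointed P q ->
  (forall I : Ob B, vertical P (alpha I)) ->
  (exists F, is_pullback_functor P alpha F) /\
  (exists S, is_sigma_functor P alpha S) /\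
  (forall F S, is_pullback_functor P alpha F -> is_sigma_functor P alpha S ->
     fibered_adjunction (SliceProj P p) (SliceProj P q) S F).
Proof.
  intros Hfib Hfp Hp Hq Hal. split; [| split].
  - eexists. exact (PullbackFun_is_pullback Hp Hq Hal Hfib Hfp).
  - eexists. exact (SigmaFun_is_sigma Hp Hq Hal).
  - intros F S [HF [pi [Hpi Hpi_nat]]] HS.
    exact (sigma_pullback_adjunction Hp Hal Hfib Hfp HF Hpi Hpi_nat HS).
Qed.
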